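(* A group $G$ is GCA-surjunctive if and only if $G$ is Hopfian and surjunctive.
   Context: For a finite set $A$ and a group $G$, $A^G$ is the set of functions $G\to A$ with shift action $(g\cdot x)(k):=x(g^{-1}k)$. For $\phi\in\mathrm{End}(G)$, a $\phi$-cellular automaton $A^G\to A^G$ is a map $\mathcal{T}$ for which there exist a finite $T\subseteq G$ and $\mu:A^T\to A$ with $\mathcal{T}(x)(h)=\mu((\phi(h^{-1})\cdot x)|_T)$ for all $x\in A^G,h\in G$; classical cellular automata are the $\mathrm{id}$-cellular automata. $\mathrm{GCA}(A^G)$ is the set of all $\phi$-cellular automata $A^G\to A^G$ over all $\phi\in\mathrm{End}(G)$. $G$ is surjunctive if for every finite set $A$, every injective classical cellular automaton $A^G\to A^G$ is surjective. $G$ is GCA-surjunctive if for every finite set $A$, every injective $\mathcal{T}\in\mathrm{GCA}(A^G)$ is surjective. $G$ is Hopfian if every surjective endomorphism of $G$ is injective. *)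

From mathcomp Require Import all_boot.
From Stdlib Require List. Import List.ListNotations.

Set Implicit Arguments.
Unset Strict Implicit.
Unset Printing Implicit Defensive.

Record AbsGroup := {
  gcar :> Type;
  gmul : gcar -> gcar -> gcar;
  gone : gcar;
  ginv : gcar -> gcar;
  gmulA : forall x y z, gmul x (gmul y z) = gmul (gmul x y) z;
  gmul1g : forall x, gmul gone x = x;
  gmulVg : forall x, gmul (ginv x) x = gone
}.

Section GCA.
Variable G : AbsGroup.

Definition is_endo (phi : G -> G) : Prop :=
  forall x y, phi (gmul x y) = gmul (phi x) (phi y).

Definition Hopfian_group : Prop :=
  forall phi : G -> G, is_endo phi ->
    (forall y, exists x, phi x = y) -> forall x y, phi x = phi y -> x = y.

Variable A : finType.

Definition shift (g : G) (x : G -> A) : G -> A := fun k => x (gmul (ginv g) k).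

Definition finite_subset (T : G -> Prop) : Prop :=
  exists s : seq G, forall t, T t -> List.In t s.

Definition is_phi_CA (phi : G -> G) (tau : (G -> A) -> (G -> A)) : Prop :=
  exists T : G -> Prop, finite_subset T /\
  exists mu : ({t : G | T t} -> A) -> A,
    forall (x : G -> A) (h : G),
      tau x h = mu (fun t => shift (phi (ginv h)) x (proj1_sig t)).

Definition is_CA (tau : (G -> A) -> (G -> A)) : Prop := is_phi_CA id tau.

Definition is_GCA (tau : (G -> A) -> (G -> A)) : Prop :=
  exists phi : G -> G, is_endo phi /\ is_phi_CA phi tau.

End GCA.

Definition injective_map (X Y : Type) (f : X -> Y) : Prop :=
  forall a b, f a = f b -> a = b.
Definition surjective_map (X Y : Type) (f : X -> Y) : Prop :=
  forall y, exists x, f x = y.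

Definition surjunctive_group (G : AbsGroup) : Prop :=
  forall (A : finType) (tau : (G -> A) -> (G -> A)),
    is_CA tau -> injective_map tau -> surjective_map tau.

Definition GCA_surjunctive_group (G : AbsGroup) : Prop :=
  forall (A : finType) (tau : (G -> A) -> (G -> A)),
    is_GCA tau -> injective_map tau -> surjective_map tau.

From mathcomp Require Import all_boot.
From Stdlib Require Import FunctionalExtensionality Classical ClassicalEpsilon.

Set Implicit Arguments.
Unset Strict Implicit.
Unset Printing Implicit Defensive.

(* The whole argument revolves around the pullback  x |-> x \o phi  of
   configurations along an endomorphism phi of G:
   - the pullback is itself a phi-cellular automaton (memory set {1});
   - it is injective as soon as phi is surjective, and conversely its
     injectivity forces phi to be surjective when the alphabet has two
     distinct letters; its surjectivity forces phi to be injective;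
     when phi is bijective the pullback is surjective;
   - every phi-cellular automaton tau factors as  tau x = (sigma x) \o phi
     for a classical cellular automaton sigma with the same local rule.
   "=>": classical automata are id-automata, and a surjective endomorphism
   phi yields an injective pullback on bool^G, surjective by hypothesis,
   so phi is injective.
   "<=": write tau = pullback o sigma.  sigma is injective, hence onto by
   surjunctivity; then the pullback is injective, so phi is onto, hence
   bijective by Hopficity, and tau is onto as a composite of onto maps
   (alphabets with at most one letter are trivial). *)

Section GroupLemmas.
Variable G : AbsGroup.

Lemma gcancel_l (a b c : G) : gmul a b = gmul a c -> b = c.
Proof. by move=> H; rewrite -(gmul1g b) -(gmul1g c) -(gmulVg a) -!gmulA H. Qed.

Lemma gmulgV (x : G) : gmul x (ginv x) = gone G.
Proof.
set y := gmul x (ginv x).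
have yy : gmul y y = y.
  by rewrite /y gmulA -(gmulA x (ginv x) x) gmulVg -gmulA gmul1g.
have := f_equal (gmul (ginv y)) yy.
by rewrite gmulA gmulVg gmul1g.
Qed.

Lemma gmulg1 (x : G) : gmul x (gone G) = x.
Proof. by rewrite -(gmulVg x) gmulA gmulgV gmul1g. Qed.

Lemma ginv_uniq (a b : G) : gmul a b = gone G -> a = ginv b.
Proof. by move=> H; rewrite -(gmulg1 a) -(gmulgV b) gmulA H gmul1g. Qed.

Lemma ginvK (a : G) : ginv (ginv a) = a.
Proof. by rewrite -(@ginv_uniq _ _ (gmulgV a)). Qed.

Lemma endo1 (phi : G -> G) : is_endo phi -> phi (gone G) = gone G.
Proof. by move=> E; apply: (@gcancel_l (phi (gone G))); rewrite -E gmul1g gmulg1. Qed.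

Lemma endoV (phi : G -> G) (h : G) :
  is_endo phi -> phi (ginv h) = ginv (phi h).
Proof. by move=> E; apply: ginv_uniq; rewrite -E gmulVg endo1. Qed.

End GroupLemmas.

Section Pullback.
Variables (G : AbsGroup) (A : finType) (phi : G -> G).

Definition pullback (x : G -> A) : G -> A := fun h => x (phi h).

(* The pullback is the phi-cellular automaton with memory set {1}
   and local rule "read the letter at 1". *)
Lemma pullback_is_GCA : is_endo phi -> is_GCA pullback.
Proof.
move=> E; exists phi; split=> //.
exists (fun t => t = gone G); split; first by exists [:: gone G] => t ->; left.
exists (fun f => f (exist (fun t => t = gone G) (gone G) erefl)) => x h /=.
by rewrite /pullback /shift endoV // ginvK gmulg1.
Qed.

Lemma pullback_inj_of_surj :
  surjective_map phi -> injective_map pullback.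
Proof.
move=> Hs x y Hxy; apply: functional_extensionality => k.
have [h <-] := Hs k.
exact: (f_equal (fun f => f h) Hxy).
Qed.

Definition indicator (a b : A) (g : G) : G -> A :=
  fun k => if excluded_middle_informative (k = g) then a else b.

Lemma indicator_at (a b : A) (g : G) : indicator a b g g = a.
Proof. by rewrite /indicator; case: excluded_middle_informative. Qed.

Lemma indicator_off (a b : A) (g k : G) : k <> g -> indicator a b g k = b.
Proof. by rewrite /indicator; case: excluded_middle_informative. Qed.

(* If g is not hit by phi, the pullback cannot distinguish the indicator
   of g from a constant configuration. *)
Lemma surj_of_pullback_inj (a b : A) :
  a <> b -> injective_map pullback -> surjective_map phi.
Proof.
move=> Nab Hinj g; apply: NNPP => Ng.
have Hind : pullback (indicator a b g) = pullback (fun _ => b).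
  apply: functional_extensionality => h; apply: indicator_off => Hh.
  by apply: Ng; exists h.
by apply: Nab; rewrite -(indicator_at a b g) (Hinj _ _ Hind).
Qed.

(* If phi u = phi v with u <> v, the indicator of u has no preimage. *)
Lemma inj_of_pullback_surj (a b : A) :
  a <> b -> surjective_map pullback -> injective_map phi.
Proof.
move=> Nab Hs u v Huv; apply: NNPP => Nuv.
have [x Hx] := Hs (indicator a b u).
have := f_equal (fun f => f v) Hx; have := f_equal (fun f => f u) Hx.
rewrite /pullback /= Huv indicator_at indicator_off; last by move=> E; case: Nuv.
by move=> -> Eab; apply: Nab.
Qed.

(* Pulling back along a bijection is onto: pull back along its inverse. *)
Lemma pullback_surj_of_bij :
  injective_map phi -> surjective_map phi -> surjective_map pullback.
Proof.
move=> Hinj Hs z.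
have psiP : forall k, {h | phi h = k}.
  by move=> k; apply: constructive_indefinite_description; apply: Hs.
exists (fun k => z (proj1_sig (psiP k))); apply: functional_extensionality => h.
by rewrite /pullback; case: (psiP (phi h)) => u /= /Hinj ->.
Qed.

Lemma phi_CA_factor (tau : (G -> A) -> G -> A) :
  is_endo phi -> is_phi_CA phi tau ->
  exists sigma, is_CA sigma /\ forall x, tau x = pullback (sigma x).
Proof.
move=> E [T [HT [mu Hmu]]].
exists (fun x h => mu (fun t => shift (ginv h) x (proj1_sig t))); split.
  by exists T; split => //; exists mu.
by move=> x; apply: functional_extensionality => h; rewrite Hmu endoV.
Qed.

End Pullback.

Lemma surj_of_trivial_alphabet (G : AbsGroup) (A : finType)
    (tau : (G -> A) -> G -> A) :
  (forall a b : A, a = b) -> surjective_map tau.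
Proof. by move=> Hall y; exists y; apply: functional_extensionality. Qed.

Lemma GCA_surj_of_Hopfian_surjunctive (G : AbsGroup) (A : finType)
    (tau : (G -> A) -> G -> A) :
  Hopfian_group G -> surjunctive_group G ->
  is_GCA tau -> injective_map tau -> surjective_map tau.
Proof.
move=> Hhop Hsur [phi [E Hphi]] Hinj.
have [sigma [Hsigma Htau]] := phi_CA_factor E Hphi.
have sigma_inj : injective_map sigma.
  by move=> x y Hxy; apply: Hinj; rewrite !Htau Hxy.
have sigma_surj := Hsur A sigma Hsigma sigma_inj.
case: (classic (exists a b : A, a <> b)) => [[a [b Nab]] | Htriv]; last first.
  apply: surj_of_trivial_alphabet => a b; apply: NNPP => Nab.
  by apply: Htriv; exists a, b.
have pull_inj : injective_map (pullback (A:=A) phi).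
  move=> x y; have [u <-] := sigma_surj x; have [v <-] := sigma_surj y.
  by move=> Hxy; rewrite (Hinj u v) // !Htau Hxy.
have phi_surj := surj_of_pullback_inj Nab pull_inj.
have pull_surj := pullback_surj_of_bij (A:=A) (Hhop phi E phi_surj) phi_surj.
move=> z; have [y <-] := pull_surj z; have [x <-] := sigma_surj y.
by exists x; rewrite Htau.
Qed.

Theorem proposition2p7 (G : AbsGroup) :
  GCA_surjunctive_group G <-> Hopfian_group G /\ surjunctive_group G.
Proof.
split.
- move=> HG; split.
  + (* a surjective phi gives an injective pullback on bool^G, which is onto *)
    move=> phi E Hs.
    apply: (@inj_of_pullback_surj G bool phi true false) => //.
    exact: HG _ _ (pullback_is_GCA bool E) (pullback_inj_of_surj (A:=bool) Hs).
  + (* classical cellular automata are id-cellular automata *)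
    by move=> A tau Hca; apply: HG; exists id.
- by move=> [Hhop Hsur] A tau; apply: GCA_surj_of_Hopfian_surjunctive.
Qed.
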